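(* Let $\mathcal{I}$ be an $F_\sigma$ ideal on $\mathbb{N}$. Then (i) $\mathcal{I}$ is uniformly $p^+$; (ii) if $\mathcal{I}$ is $q^+$, then $\mathcal{I}$ is uniformly $q^+$. In particular, every selective $F_\sigma$ ideal is uniformly selective.
   Context: Subsets of $\mathbb{N}$ are identified with elements of $2^{\mathbb{N}}$. An ideal on $\mathbb{N}$ is a hereditary family closed under finite unions; it is $F_\sigma$ if it is an $F_\sigma$ subset of $2^{\mathbb{N}}$; $\mathcal{I}^+=2^{\mathbb{N}}\setminus\mathcal{I}$. For $x\subseteq\mathbb{N}$, $x/n=\{m\in x:m>n\}$. $\mathcal{I}$ is $q^+$ if for every $x\in\mathcal{I}^+$ and every partition $(s_n)_{n}$ of $x$ into finite sets there is $y\subseteq x$ with $y\in\mathcal{I}^+$ and $|y\cap s_n|\le 1$ for all $n$. $\mathcal{I}$ is selective if for every $\subseteq$-decreasing sequence $(x_n)_n$ in $\mathcal{I}^+$ there is $x\in\mathcal{I}^+$ with $x/n\subseteq x_n$ for all $n\in x$. $\mathcal{I}$ is uniformly $p^+$ if there is a Borel $G:(2^{\mathbb{N}})^{\mathbb{N}}\to2^{\mathbb{N}}$ such that for every decreasing sequence $(x_n)_n$ in $\mathcal{I}^+$, $G((x_n)_n)\in\mathcal{I}^+$ and $G((x_n)_n)\setminus x_n$ is finite for all $n$. $\mathcal{I}$ is uniformly $q^+$ if there is a Borel $F:2^{\mathbb{N}}\times([\mathbb{N}]^{<\omega})^{\mathbb{N}}\to2^{\mathbb{N}}$ such that whenever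 $x\in\mathcal{I}^+$ and $(s_n)_n$ is a partition of $x$ into finite sets, $y=F(x,(s_n)_n)$ satisfies $y\subseteq x$, $y\in\mathcal{I}^+$ and $|y\cap s_n|\le1$ for all $n$. $\mathcal{I}$ is uniformly selective if there is a Borel $H:(2^{\mathbb{N}})^{\mathbb{N}}\to2^{\mathbb{N}}$ such that for every decreasing sequence $(x_n)_n$ in $\mathcal{I}^+$, $x=H((x_n)_n)\in\mathcal{I}^+$ and $x/n\subseteq x_n$ for all $n\in x$. *)

From Stdlib Require Import Arith Bool.
Open Scope bool_scope.

Definition cantor := nat -> bool.
Definition cantor_seq := nat -> cantor.

Inductive sigma_gen {X : Type} (G : (X -> Prop) -> Prop) : (X -> Prop) -> Prop :=
  | sg_base A : G A -> sigma_gen G A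
  | sg_compl A : sigma_gen G A -> sigma_gen G (fun x => ~ A x)
  | sg_union (A : nat -> X -> Prop) :
      (forall n, sigma_gen G (A n)) -> sigma_gen G (fun x => exists n, A n x)
  | sg_ext A B : (forall x, A x <-> B x) -> sigma_gen G A -> sigma_gen G B.

Definition borel_fun {X Y : Type} (GX : (X -> Prop) -> Prop)
    (GY : (Y -> Prop) -> Prop) (f : X -> Y) : Prop :=
  forall B, sigma_gen GY B -> sigma_gen GX (fun x => B (f x)).

(* Subbasic clopen sets generating the Borel sets of the product topologies. *)
Definition cantor_gen (A : cantor -> Prop) : Prop :=
  exists n, A = (fun x => x n = true).
Definition cantor_seq_gen (A : cantor_seq -> Prop) : Prop :=
  exists m n, A = (fun X => X m n = true).
Definition cantor_pair_gen (A : cantor * cantor_seq -> Prop) : Prop :=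
  (exists n, A = (fun p => fst p n = true)) \/
  (exists m n, A = (fun p => snd p m n = true)).

Definition cantor_open (U : cantor -> Prop) : Prop :=
  forall x, U x -> exists N, forall y, (forall k, k < N -> y k = x k) -> U y.
Definition cantor_closed (C : cantor -> Prop) : Prop :=
  cantor_open (fun x => ~ C x).
Definition F_sigma (P : cantor -> Prop) : Prop :=
  exists C : nat -> cantor -> Prop,
    (forall n, cantor_closed (C n)) /\ (forall x, P x <-> exists n, C n x).

Definition subset (x y : cantor) : Prop := forall k, x k = true -> y k = true.
Definition finite_set (x : cantor) : Prop := exists N, forall k, x k = true -> k < N.
Definition set_diff (x y : cantor) : cantor := fun k => x k && negb (y k).

Definition is_ideal (I : cantor -> Prop) : Prop :=
  (forall x y, I x -> subset y x -> I y) /\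
  (forall x y, I x -> I y -> I (fun k => x k || y k)).

Definition positive (I : cantor -> Prop) (x : cantor) : Prop := ~ I x.

Definition decreasing (X : cantor_seq) : Prop := forall n, subset (X (S n)) (X n).

(* (s_n) is a partition of x into finite sets (empty pieces allowed) *)
Definition finite_partition (x : cantor) (s : cantor_seq) : Prop :=
  (forall n, finite_set (s n)) /\
  (forall n m k, n <> m -> s n k = true -> s m k = true -> False) /\
  (forall k, x k = true <-> exists n, s n k = true).

Definition selector (y : cantor) (s : cantor_seq) : Prop :=
  forall n a b, y a = true -> s n a = true -> y b = true -> s n b = true -> a = b.

Definition diagonalizes (x : cantor) (X : cantor_seq) : Prop :=
  forall n, x n = true -> forall m, n < m -> x m = true -> X n m = true.

Definition qplus (I : cantor -> Prop) : Prop :=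
  forall x s, positive I x -> finite_partition x s ->
    exists y, subset y x /\ positive I y /\ selector y s.

Definition selective (I : cantor -> Prop) : Prop :=
  forall X : cantor_seq, decreasing X -> (forall n, positive I (X n)) ->
    exists x, positive I x /\ diagonalizes x X.

Definition uniformly_pplus (I : cantor -> Prop) : Prop :=
  exists G : cantor_seq -> cantor, borel_fun cantor_seq_gen cantor_gen G /\
    forall X, decreasing X -> (forall n, positive I (X n)) ->
      positive I (G X) /\ forall n, finite_set (set_diff (G X) (X n)).

Definition uniformly_qplus (I : cantor -> Prop) : Prop :=
  exists F : cantor * cantor_seq -> cantor,
    borel_fun cantor_pair_gen cantor_gen F /\
    forall x s, positive I x -> finite_partition x s ->
      subset (F (x, s)) x /\ positive I (F (x, s)) /\ selector (F (x, s)) s.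

Definition uniformly_selective (I : cantor -> Prop) : Prop :=
  exists H : cantor_seq -> cantor, borel_fun cantor_seq_gen cantor_gen H /\
    forall X, decreasing X -> (forall n, positive I (X n)) ->
      positive I (H X) /\ diagonalizes (H X) X.

(* Write I as the union of closed sets C_n and let E_j = C_0 u ... u C_j. If y is not in I
   then, by compactness of 2^N, for every j some finite subset of y is contained in no member
   of E_j: it escapes E_j. The Borel witnesses are built by a greedy recursion: stage j takes
   the least code of a finite set that escapes E_j and satisfies a further condition relative
   to the input and to the finitely many pieces already chosen. The union of the pieces lies in
   no C_n, since its n-th piece escapes E_n, so it is I-positive; and each stage is a least
   choice among countably many codes under Borel conditions, so the construction is Borel.
   The hypotheses q+ and selectivity are only used to show that an admissible piece exists at
   every stage, and there one may assume that all finite sets are in I, since otherwise a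
   positive singleton is a trivial witness. *)

From Stdlib Require Import Arith Lia Bool Classical ClassicalEpsilon.

Definition asbool (P : Prop) : bool :=
  if excluded_middle_informative P then true else false.

Lemma asboolE (P : Prop) : asbool P = true <-> P.
Proof.
  unfold asbool; destruct (excluded_middle_informative P); split; intros; auto; discriminate.
Qed.

Definition code_set (c : nat) : cantor := Nat.testbit c.

Lemma code_set_finite (c : nat) : finite_set (code_set c).
Proof.
  exists (S (Nat.log2 c)); intros k hk.
  destruct (Nat.lt_ge_cases k (S (Nat.log2 c))) as [h|h]; [exact h|].
  unfold code_set in hk; rewrite Nat.bits_above_log2 in hk by lia; discriminate.
Qed.

Lemma code_set_prefix (y : cantor) (m : nat) :
  exists c, forall k, code_set c k = (k <? m) && y k.
Proof.
  induction m as [|m [c Hc]].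
  - exists 0; intros k; apply Nat.bits_0.
  - exists (if y m then Nat.setbit c m else c); intros k; unfold code_set in *.
    destruct (Nat.eqb_spec m k) as [<-|ne].
    + rewrite (proj2 (Nat.ltb_lt m (S m))) by lia.
      destruct (y m) eqn:ym; [rewrite Nat.setbit_eqb, Nat.eqb_refl; reflexivity|].
      rewrite Hc, Nat.ltb_irrefl; reflexivity.
    + replace (k <? S m) with (k <? m)
        by (destruct (Nat.ltb_spec k m), (Nat.ltb_spec k (S m)); auto; lia).
      destruct (y m); [rewrite Nat.setbit_eqb, (proj2 (Nat.eqb_neq m k) ne)|]; apply Hc.
Qed.

Section LeastWitness.
Variable Q : nat -> Prop.

Lemma exists_least : (exists c, Q c) -> exists c, Q c /\ forall c', c' < c -> ~ Q c'.
Proof.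
  intros [c Hc]; induction c as [c IH] using lt_wf_ind.
  destruct (classic (exists c', c' < c /\ Q c')) as [[c' [lt Qc']]|none].
  - exact (IH c' lt Qc').
  - exists c; split; [exact Hc|]; intros c' lt Qc'; apply none; eauto.
Qed.

(* Junk value [0] when [Q] has no witness. *)
Definition least_witness : nat :=
  match excluded_middle_informative (exists c, Q c) with
  | left H => proj1_sig (constructive_indefinite_description _ (exists_least H))
  | right _ => 0
  end.

Lemma least_witness_eq (w : nat) :
  least_witness = w <->
  (Q w /\ forall c', c' < w -> ~ Q c') \/ (~ (exists c, Q c) /\ w = 0).
Proof.
  unfold least_witness; destruct (excluded_middle_informative _) as [H|H].
  - destruct (constructive_indefinite_description _ _) as [c [Qc minc]]; simpl.
    split; [intros <-; left; auto|].
    intros [[Qw minw]|[none _]]; [|contradiction].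
    destruct (lt_eq_lt_dec c w) as [[lt|eq]|lt];
      [exfalso; exact (minw c lt Qc)|exact eq|exfalso; exact (minc w lt Qw)].
  - split; [intros <-; right; auto|].
    intros [[Qw _]|[_ ->]]; [exfalso; exact (H (ex_intro _ w Qw))|reflexivity].
Qed.

Lemma least_witnessP : (exists c, Q c) -> Q least_witness.
Proof.
  intros H; destruct (proj1 (least_witness_eq least_witness) eq_refl) as [[Qw _]|[none _]];
    [exact Qw|contradiction].
Qed.
End LeastWitness.

Section SigmaGenClosure.
Context {T : Type} (G : (T -> Prop) -> Prop).

Lemma sigma_gen_or (Q1 Q2 : T -> Prop) :
  sigma_gen G Q1 -> sigma_gen G Q2 -> sigma_gen G (fun p => Q1 p \/ Q2 p).
Proof.
  intros h1 h2.
  apply (sg_ext _ (fun p => exists n, (match n with 0 => Q1 | _ => Q2 end) p)).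
  - intros p; split; [intros [[|n] h]; auto|intros [h|h]; [exists 0|exists 1]; auto].
  - apply sg_union; intros [|n]; auto.
Qed.

Lemma sigma_gen_and (Q1 Q2 : T -> Prop) :
  sigma_gen G Q1 -> sigma_gen G Q2 -> sigma_gen G (fun p => Q1 p /\ Q2 p).
Proof.
  intros h1 h2; apply (sg_ext _ (fun p => ~ (~ Q1 p \/ ~ Q2 p))); [intros p; tauto|].
  apply sg_compl, sigma_gen_or; apply sg_compl; auto.
Qed.

Lemma sigma_gen_imp (Q1 Q2 : T -> Prop) :
  sigma_gen G Q1 -> sigma_gen G Q2 -> sigma_gen G (fun p => Q1 p -> Q2 p).
Proof.
  intros h1 h2; apply (sg_ext _ (fun p => ~ Q1 p \/ Q2 p)); [intros p; tauto|].
  apply sigma_gen_or; [apply sg_compl|]; auto.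
Qed.

Lemma sigma_gen_all (Q : nat -> T -> Prop) :
  (forall n, sigma_gen G (Q n)) -> sigma_gen G (fun p => forall n, Q n p).
Proof.
  intros h; apply (sg_ext _ (fun p => ~ exists n, ~ Q n p)).
  - intros p; split; [intros H n; apply NNPP; eauto|intros H [n Hn]; auto].
  - apply sg_compl, sg_union; intros n; apply sg_compl; auto.
Qed.

Lemma sigma_gen_const (A0 : T -> Prop) (R : Prop) : G A0 -> sigma_gen G (fun _ => R).
Proof.
  intros HA0; assert (full : sigma_gen G (fun p => A0 p \/ ~ A0 p))
    by (apply sigma_gen_or; [|apply sg_compl]; apply sg_base; exact HA0).
  destruct (classic R) as [r|r].
  - apply (sg_ext _ _ _ (fun p => conj (fun _ => r) (fun _ => classic (A0 p))) full).
  - apply (sg_ext _ (fun p => ~ (A0 p \/ ~ A0 p))); [intros p; tauto|].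
    apply sg_compl, full.
Qed.
End SigmaGenClosure.

(* [leaf] must prove the atomic events and provide a set of the generating family. *)
Ltac sigma_gen_closure leaf :=
  repeat match goal with
  | |- sigma_gen _ (fun _ => ?R) => eapply sigma_gen_const; leaf
  | |- sigma_gen _ (fun _ => forall n : nat, _) => apply sigma_gen_all; intro
  | |- sigma_gen _ (fun _ => exists n : nat, _) => apply sg_union; intro
  | |- sigma_gen _ (fun _ => _ /\ _) => apply sigma_gen_and
  | |- sigma_gen _ (fun _ => _ \/ _) => apply sigma_gen_or
  | |- sigma_gen _ (fun _ => ~ _) => apply sg_compl
  | |- sigma_gen _ (fun _ => _ -> _) => apply sigma_gen_imp
  | |- sigma_gen _ _ => leaf
  end.

Lemma borel_fun_of_coords {T : Type} (G : (T -> Prop) -> Prop) (f : T -> cantor) :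
  (forall k, sigma_gen G (fun p => f p k = true)) -> borel_fun G cantor_gen f.
Proof.
  intros H B HB; induction HB as [B [n ->]| | |A B e _ IH].
  - apply H.
  - apply sg_compl; auto.
  - apply sg_union; auto.
  - apply (sg_ext _ (fun p => A (f p))); auto.
Qed.

Section GreedyConstruction.
Context {T : Type} (Cond : nat -> T -> cantor -> cantor -> Prop).

(* [u] codes the union of the pieces chosen before stage [j]. *)
Definition greedy_pick (j : nat) (p : T) (u : nat) : nat :=
  least_witness (fun c => Cond j p (code_set u) (code_set c)).

Fixpoint greedy_stage (p : T) (j : nat) : nat :=
  match j with
  | 0 => 0
  | S j => Nat.lor (greedy_stage p j) (greedy_pick j p (greedy_stage p j))
  end.

Definition greedy_piece (p : T) (i : nat) : cantor :=
  code_set (greedy_pick i p (greedy_stage p i)).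

Definition greedy_prefix (p : T) (j : nat) : cantor := code_set (greedy_stage p j).

Definition greedy_union (p : T) : cantor :=
  fun k => asbool (exists i, greedy_piece p i k = true).

Lemma greedy_prefixP (p : T) (j k : nat) :
  greedy_prefix p j k = true <-> exists i, i < j /\ greedy_piece p i k = true.
Proof.
  unfold greedy_prefix, greedy_piece, code_set; induction j as [|j IH]; simpl.
  - rewrite Nat.bits_0; split; [discriminate|intros [i [lt _]]; lia].
  - rewrite Nat.lor_spec, orb_true_iff, IH; split.
    + intros [[i [lt h]]|h]; [exists i; split; [lia|exact h]|exists j; auto].
    + intros [i [lt h]]; destruct (Nat.eq_dec i j) as [->|ne]; [now right|].
      left; exists i; split; [lia|exact h].
Qed.

Lemma greedy_unionP (p : T) (k : nat) :
  greedy_union p k = true <-> exists i, greedy_piece p i k = true.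
Proof. apply asboolE. Qed.

Lemma greedy_piece_sub_union (p : T) (i : nat) : subset (greedy_piece p i) (greedy_union p).
Proof. intros k hk; apply greedy_unionP; eauto. Qed.

Lemma greedy_piece_cond (p : T) :
  (forall j u, finite_set u -> exists c, Cond j p u (code_set c)) ->
  forall i, Cond i p (greedy_prefix p i) (greedy_piece p i).
Proof.
  intros H i; apply (least_witnessP (fun c => Cond i p (greedy_prefix p i) (code_set c))).
  apply H, code_set_finite.
Qed.

Section Measurability.
Variables (G : (T -> Prop) -> Prop) (A0 : T -> Prop).
Hypothesis G_A0 : G A0.
Hypothesis Cond_measurable :
  forall j u c, sigma_gen G (fun p => Cond j p (code_set u) (code_set c)).

Lemma sigma_gen_greedy_pick_eq (j u w : nat) :
  sigma_gen G (fun p => greedy_pick j p u = w).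
Proof.
  apply (sg_ext _ (fun p =>
    (Cond j p (code_set u) (code_set w) /\
       forall c', c' < w -> ~ Cond j p (code_set u) (code_set c')) \/
    (~ (exists c, Cond j p (code_set u) (code_set c)) /\ w = 0))).
  - intros p; symmetry; apply (least_witness_eq (fun c => Cond j p (code_set u) (code_set c))).
  - sigma_gen_closure ltac:(first [exact G_A0|apply Cond_measurable]).
Qed.

Lemma sigma_gen_greedy_stage_eq (j : nat) :
  forall u, sigma_gen G (fun p => greedy_stage p j = u).
Proof.
  induction j as [|j IH]; intros u; simpl; [exact (sigma_gen_const _ _ _ G_A0)|].
  apply (sg_ext _ (fun p => exists v w,
    greedy_stage p j = v /\ greedy_pick j p v = w /\ Nat.lor v w = u)).
  - intros p; split; [intros [v [w [-> [-> ->]]]]; reflexivity|intros <-; eauto].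
  - sigma_gen_closure ltac:(first [exact G_A0|apply IH|apply sigma_gen_greedy_pick_eq]).
Qed.

Lemma borel_greedy_union : borel_fun G cantor_gen greedy_union.
Proof.
  apply borel_fun_of_coords; intros k.
  apply (sg_ext _ (fun p => exists i v w,
    greedy_stage p i = v /\ greedy_pick i p v = w /\ code_set w k = true)).
  - intros p; rewrite greedy_unionP; unfold greedy_piece; split.
    + intros [i [v [w [ev [ew h]]]]]; subst v w; eauto.
    + intros [i h]; exists i, (greedy_stage p i), (greedy_pick i p (greedy_stage p i)); auto.
  - sigma_gen_closure ltac:(first [exact G_A0|apply sigma_gen_greedy_stage_eq
                                  |apply sigma_gen_greedy_pick_eq]).
Qed.
End Measurability.
End GreedyConstruction.

Section Compactness.
Variable C : cantor -> Prop.
Hypothesis C_closed : cantor_closed C.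
Variable y : cantor.
Hypothesis prefixes_covered :
  forall m, exists z, C z /\ forall k, k < m -> y k = true -> z k = true.

Definition extendable (p : cantor) (L : nat) : Prop :=
  forall M, exists z, C z /\ (forall k, k < L -> z k = p k) /\
                      (forall k, k < M -> y k = true -> z k = true).

Definition set_bit (p : cantor) (L : nat) (b : bool) : cantor :=
  fun k => if k =? L then b else p k.

Lemma extendable_0 (p : cantor) : extendable p 0.
Proof.
  intros M; destruct (prefixes_covered M) as [z [Cz cov]].
  exists z; repeat split; auto; intros; lia.
Qed.

Lemma extendable_ext (p q : cantor) (L : nat) :
  (forall k, k < L -> p k = q k) -> extendable p L -> extendable q L.
Proof.
  intros e H M; destruct (H M) as [z [Cz [agree cov]]].
  exists z; repeat split; auto; intros k hk; rewrite agree, e; auto.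
Qed.

(* König's lemma for the binary tree: one of the two extensions stays extendable. *)
Lemma extendable_step (p : cantor) (L : nat) :
  extendable p L -> extendable (set_bit p L true) (S L) \/ extendable (set_bit p L false) (S L).
Proof.
  intros H; apply NNPP; intros Hn; apply not_or_and in Hn; destruct Hn as [h1 h0].
  apply not_all_ex_not in h1; apply not_all_ex_not in h0.
  destruct h1 as [M1 h1], h0 as [M0 h0].
  destruct (H (max M0 M1)) as [z [Cz [agree cov]]].
  assert (agree' : forall k, k < S L -> z k = set_bit p L (z L) k).
  { intros k hk; unfold set_bit; destruct (Nat.eqb_spec k L) as [->|ne]; auto; apply agree; lia. }
  destruct (z L) eqn:zL; [apply h1|apply h0]; exists z; repeat split; auto;
    intros k hk; apply cov; lia.
Qed.

Fixpoint branch (L : nat) : cantor :=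
  match L with
  | 0 => fun _ => false
  | S L =>
      if excluded_middle_informative (extendable (set_bit (branch L) L true) (S L))
      then set_bit (branch L) L true else set_bit (branch L) L false
  end.

Lemma branch_extendable (L : nat) : extendable (branch L) L.
Proof.
  induction L as [|L IH]; simpl; [apply extendable_0|].
  destruct (excluded_middle_informative _) as [h|h]; auto.
  destruct (extendable_step _ _ IH); auto; contradiction.
Qed.

Lemma branch_agree (L L' : nat) : L <= L' -> forall k, k < L -> branch L' k = branch L k.
Proof.
  induction 1 as [|L' le IH]; auto; intros k hk; simpl; rewrite <- (IH k hk).
  destruct (excluded_middle_informative _); unfold set_bit;
    destruct (Nat.eqb_spec k L'); auto; lia.
Qed.

Definition branch_limit : cantor := fun k => branch (S k) k.

Lemma branch_limit_extendable (L : nat) : extendable branch_limit L.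
Proof.
  apply (extendable_ext (branch L)); [|apply branch_extendable].
  intros k hk; unfold branch_limit; apply branch_agree; lia.
Qed.

Lemma closed_cover_of_prefix_covers : exists z, C z /\ subset y z.
Proof.
  exists branch_limit; split.
  - apply NNPP; intros hn; destruct (C_closed branch_limit hn) as [N hN].
    destruct (branch_limit_extendable N 0) as [z [Cz [agree _]]].
    exact (hN z agree Cz).
  - intros k hk; destruct (branch_limit_extendable (S k) (S k)) as [z [Cz [agree cov]]].
    rewrite <- agree by lia; apply cov; auto.
Qed.
End Compactness.

Lemma closed_or (A B : cantor -> Prop) :
  cantor_closed A -> cantor_closed B -> cantor_closed (fun x => A x \/ B x).
Proof.
  intros hA hB x hx.
  destruct (hA x) as [N1 h1]; [tauto|]; destruct (hB x) as [N2 h2]; [tauto|].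
  exists (max N1 N2); intros z hz [h|h]; [apply (h1 z)|apply (h2 z)]; auto;
    intros k hk; apply hz; lia.
Qed.

Lemma closed_ext (A B : cantor -> Prop) :
  (forall x, A x <-> B x) -> cantor_closed A -> cantor_closed B.
Proof.
  intros e hA x hx; destruct (hA x) as [N h]; [rewrite e; exact hx|].
  exists N; intros z hz; rewrite <- e; auto.
Qed.

Lemma finite_set_subset (x y : cantor) : subset x y -> finite_set y -> finite_set x.
Proof. intros xy [N hN]; exists N; intros k hk; apply hN, xy, hk. Qed.

Lemma decreasing_le (X : cantor_seq) :
  decreasing X -> forall n m, n <= m -> subset (X m) (X n).
Proof.
  intros H n m le; induction le as [|m _ IH]; intros k hk; [exact hk|apply IH, H, hk].
Qed.

Lemma finite_partition_restrict (x z : cantor) (s : cantor_seq) :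
  finite_partition x s -> subset z x -> finite_partition z (fun n k => s n k && z k).
Proof.
  intros [fin [disj cov]] zx; split; [|split].
  - intros n; apply (finite_set_subset _ (s n)); [|apply fin].
    intros k hk; apply andb_prop in hk; tauto.
  - intros n m k ne h1 h2; apply andb_prop in h1, h2; exact (disj n m k ne (proj1 h1) (proj1 h2)).
  - intros k; split.
    + intros zk; destruct (proj1 (cov k) (zx k zk)) as [n snk].
      exists n; rewrite snk, zk; reflexivity.
    + intros [n hn]; apply andb_prop in hn; tauto.
Qed.

Definition pieces_meeting (s : cantor_seq) (u : cantor) : cantor :=
  fun k => asbool (exists n i, u i = true /\ s n i = true /\ s n k = true).

Lemma pieces_meeting_finite (x u : cantor) (s : cantor_seq) :
  finite_partition x s -> finite_set u -> finite_set (pieces_meeting s u).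
Proof.
  intros [fin [disj _]] [N uN].
  assert (bound : forall N, exists B, forall i n k,
            i < N -> s n i = true -> s n k = true -> k < B).
  { clear uN; intros N'; induction N' as [|N' [B hB]]; [exists 0; intros; lia|].
    destruct (classic (exists n, s n N' = true)) as [[n0 sn0]|none].
    - destruct (fin n0) as [b hb]; exists (max B b); intros i n k lt sni snk.
      destruct (Nat.eq_dec i N') as [->|ne]; [|specialize (hB i n k ltac:(lia) sni snk); lia].
      destruct (Nat.eq_dec n n0) as [->|ne]; [specialize (hb k snk); lia|].
      exfalso; exact (disj n n0 N' ne sni sn0).
    - exists B; intros i n k lt sni snk.
      destruct (Nat.eq_dec i N') as [->|ne]; [exfalso; eauto|apply (hB i n k); auto; lia]. }
  destruct (bound N) as [B hB]; exists B; intros k hk; unfold pieces_meeting in hk.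
  rewrite asboolE in hk.
  destruct hk as (n & i & ui & sni & snk); exact (hB i n k (uN i ui) sni snk).
Qed.

Lemma seq_gen_atom (j k : nat) : sigma_gen cantor_seq_gen (fun X : cantor_seq => X j k = true).
Proof. apply sg_base; exists j, k; reflexivity. Qed.

Lemma seq_gen_nonempty : cantor_seq_gen (fun X => X 0 0 = true).
Proof. exists 0, 0; reflexivity. Qed.

Lemma pair_gen_fst (k : nat) :
  sigma_gen cantor_pair_gen (fun p : cantor * cantor_seq => fst p k = true).
Proof. apply sg_base; left; exists k; reflexivity. Qed.

Lemma pair_gen_snd (n k : nat) :
  sigma_gen cantor_pair_gen (fun p : cantor * cantor_seq => snd p n k = true).
Proof. apply sg_base; right; exists n, k; reflexivity. Qed.

Lemma pair_gen_nonempty : cantor_pair_gen (fun p : cantor * cantor_seq => fst p 0 = true).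
Proof. left; exists 0; reflexivity. Qed.

Definition singleton (a : nat) : cantor := fun k => k =? a.

Section FsigmaIdeal.
Variables (I : cantor -> Prop) (Cs : nat -> cantor -> Prop).
Hypothesis Cs_closed : forall n, cantor_closed (Cs n).
Hypothesis I_Cs : forall x, I x <-> exists n, Cs n x.
Hypothesis I_hereditary : forall x y, I x -> subset y x -> I y.
Hypothesis I_union : forall x y, I x -> I y -> I (fun k => x k || y k).

Definition Cs_upto (j : nat) (z : cantor) : Prop := exists i, i <= j /\ Cs i z.

Definition escapes (j : nat) (w : cantor) : Prop := ~ exists z, Cs_upto j z /\ subset w z.

Lemma Cs_upto_closed (j : nat) : cantor_closed (Cs_upto j).
Proof.
  induction j as [|j IH].
  - apply (closed_ext (Cs 0)); [|apply Cs_closed]; intros x; split.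
    + intros h; exists 0; auto.
    + intros [i [le h]]; replace i with 0 in h by lia; exact h.
  - apply (closed_ext (fun x => Cs_upto j x \/ Cs (S j) x)); [|apply closed_or; auto].
    intros x; split.
    + intros [[i [le h]]|h]; [exists i; split; [lia|exact h]|exists (S j); auto].
    + intros [i [le h]]; destruct (Nat.eq_dec i (S j)) as [->|ne]; [now right|].
      left; exists i; split; [lia|exact h].
Qed.

Lemma escaping_code (y : cantor) :
  positive I y -> forall j, exists c, escapes j (code_set c) /\ subset (code_set c) y.
Proof.
  intros ypos j.
  assert (prefix : exists m, escapes j (fun k => (k <? m) && y k)).
  { apply NNPP; intros none; apply ypos.
    destruct (closed_cover_of_prefix_covers _ (Cs_upto_closed j) y) as [z [[i [_ Cz]] yz]].
    - intros m; apply NNPP; intros h; apply none; exists m; intros [z [Cz cov]]; apply h.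
      exists z; split; [exact Cz|]; intros k lt yk; apply cov.
      rewrite yk, (proj2 (Nat.ltb_lt k m) lt); reflexivity.
    - apply (I_hereditary z); [apply I_Cs; eauto|exact yz]. }
  destruct prefix as [m esc]; destruct (code_set_prefix y m) as [c hc].
  exists c; split.
  - intros [z [Cz cov]]; apply esc; exists z; split; [exact Cz|].
    intros k hk; apply cov; rewrite hc; exact hk.
  - intros k hk; rewrite hc in hk; apply andb_prop in hk; tauto.
Qed.

(* A union lying in [Cs n] would contain the [n]-th piece, which escapes [Cs_upto n]. *)
Lemma greedy_union_positive {T : Type} (Cond : nat -> T -> cantor -> cantor -> Prop) (p : T) :
  (forall j u c, Cond j p u c -> escapes j c) ->
  (forall j u, finite_set u -> exists c, Cond j p u (code_set c)) ->
  positive I (greedy_union Cond p).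
Proof.
  intros esc ex hy; apply I_Cs in hy; destruct hy as [n Cy].
  apply (esc n (greedy_prefix Cond p n) (greedy_piece Cond p n)); [|exists (greedy_union Cond p)].
  - apply greedy_piece_cond, ex.
  - split; [exists n; auto|apply greedy_piece_sub_union].
Qed.

Lemma positive_superset (x y : cantor) : positive I x -> subset x y -> positive I y.
Proof. intros xpos xy Iy; apply xpos, (I_hereditary y); auto. Qed.

Lemma positive_diff (x z w : cantor) :
  positive I x -> I w -> (forall k, x k = true -> z k = true \/ w k = true) -> positive I z.
Proof.
  intros xpos Iw cov Iz; apply xpos, (I_hereditary _ _ (I_union _ _ Iz Iw)).
  intros k hk; apply orb_true_iff; auto.
Qed.

Lemma finite_in_ideal (x : cantor) :
  I (fun _ => false) -> (forall a, x a = true -> I (singleton a)) ->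
  forall w, subset w x -> finite_set w -> I w.
Proof.
  intros I0 Ix w wx [N wN]; revert w wx wN; induction N as [|N IH]; intros w wx wN.
  - apply (I_hereditary _ _ I0); intros k hk; specialize (wN k hk); lia.
  - set (w' := fun k => (k <? N) && w k).
    assert (Iw' : I w').
    { apply IH; intros k hk; apply andb_prop in hk; [apply wx|apply Nat.ltb_lt]; tauto. }
    destruct (w N) eqn:wNt.
    + apply (I_hereditary _ _ (I_union _ _ Iw' (Ix N (wx N wNt)))).
      intros k hk; unfold w', singleton; destruct (Nat.eqb_spec k N) as [->|ne];
        [apply orb_true_r|].
      rewrite hk, orb_false_r, andb_true_r; apply Nat.ltb_lt; specialize (wN k hk); lia.
    + apply (I_hereditary _ _ Iw'); intros k hk; unfold w'; rewrite hk, andb_true_r.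
      apply Nat.ltb_lt; specialize (wN k hk).
      destruct (Nat.eq_dec k N) as [->|ne]; [congruence|lia].
Qed.

Definition pplus_cond (j : nat) (X : cantor_seq) (u c : cantor) : Prop :=
  subset c (X j) /\ escapes j c.

Lemma uniformly_pplus_Fsigma : uniformly_pplus I.
Proof.
  exists (greedy_union pplus_cond); split.
  - apply (borel_greedy_union _ _ _ seq_gen_nonempty); intros j u c.
    unfold pplus_cond, subset, escapes.
    sigma_gen_closure ltac:(first [exact seq_gen_nonempty|apply seq_gen_atom]).
  - intros X Xdec Xpos.
    assert (exists_piece : forall j u, finite_set u -> exists c, pplus_cond j X u (code_set c)).
    { intros j u _; destruct (escaping_code (X j) (Xpos j) j) as [c [esc cX]].
      exists c; split; auto. }
    pose proof (greedy_piece_cond _ X exists_piece) as cond.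
    split; [apply greedy_union_positive; [intros j u c [_ esc]; exact esc|exact exists_piece]|].
    intros n; apply (finite_set_subset _ (greedy_prefix pplus_cond X n)); [|apply code_set_finite].
    intros k hk; apply andb_prop in hk; destruct hk as [hk notXn].
    apply greedy_unionP in hk; destruct hk as [i hi].
    apply greedy_prefixP; exists i; split; [|exact hi].
    destruct (Nat.lt_ge_cases i n) as [lt|ge]; [exact lt|exfalso].
    rewrite (decreasing_le X Xdec n i ge k (proj1 (cond i) k hi)) in notXn; discriminate.
Qed.

Definition qplus_cond (j : nat) (p : cantor * cantor_seq) (u c : cantor) : Prop :=
  subset c (fst p) /\ selector c (snd p) /\
  (forall n i k, u i = true -> snd p n i = true -> c k = true -> snd p n k = true -> False) /\
  escapes j c.

Lemma qplus_cond_exists (x : cantor) (s : cantor_seq) :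
  qplus I -> positive I x -> finite_partition x s ->
  (forall a, x a = true -> I (singleton a)) ->
  forall j u, finite_set u -> exists c, qplus_cond j (x, s) u (code_set c).
Proof.
  intros Hq xpos part Ix j u ufin.
  set (z := set_diff x (pieces_meeting s u)).
  assert (zx : subset z x) by (intros k hk; apply andb_prop in hk; tauto).
  assert (zpos : positive I z).
  { intros Iz.
    assert (I0 : I (fun _ => false)) by (apply (I_hereditary _ _ Iz); intros k hk; discriminate).
    refine (positive_diff x z (fun k => x k && pieces_meeting s u k) xpos _ _ Iz).
    - apply (finite_in_ideal x I0 Ix); [intros k hk; apply andb_prop in hk; tauto|].
      apply (finite_set_subset _ (pieces_meeting s u));
        [|exact (pieces_meeting_finite x u s part ufin)].
      intros k hk; apply andb_prop in hk; tauto.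
    - intros k xk; unfold z, set_diff; rewrite xk; destruct (pieces_meeting s u k); auto. }
  destruct (Hq z _ zpos (finite_partition_restrict x z s part zx)) as [y [yz [ypos ysel]]].
  destruct (escaping_code y ypos j) as [c [esc cy]].
  assert (cz : subset (code_set c) z) by (intros k hk; apply yz, cy, hk).
  exists c; split; [|split; [|split]]; simpl; [| | |exact esc].
  - intros k hk; apply zx, cz, hk.
  - intros n a b ca sa cb sb; apply (ysel n); try apply cy; auto;
      apply andb_true_intro; split; auto; apply cz; auto.
  - intros n i k ui sni ck snk; specialize (cz k ck).
    unfold z, set_diff in cz; apply andb_prop in cz; destruct cz as [_ notW].
    assert (W : pieces_meeting s u k = true) by (apply asboolE; exists n, i; auto).
    rewrite W in notW; discriminate.
Qed.

Lemma greedy_qplus_selector (x : cantor) (s : cantor_seq) :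
  qplus I -> positive I x -> finite_partition x s ->
  (forall a, x a = true -> I (singleton a)) ->
  let y := greedy_union qplus_cond (x, s) in
  subset y x /\ positive I y /\ selector y s.
Proof.
  intros Hq xpos part Ix y.
  pose proof (qplus_cond_exists x s Hq xpos part Ix) as exists_piece.
  pose proof (greedy_piece_cond _ (x, s) exists_piece) as cond.
  split; [|split].
  - intros k hk; apply greedy_unionP in hk; destruct hk as [i hi]; exact (proj1 (cond i) k hi).
  - apply greedy_union_positive; [intros j u c (_ & _ & _ & esc); exact esc|exact exists_piece].
  - intros n a b ha sa hb sb; apply greedy_unionP in ha, hb.
    destruct ha as [i hi], hb as [j hj]; destruct (lt_eq_lt_dec i j) as [[lt|<-]|lt].
    + destruct (cond j) as (_ & _ & avoid & _); exfalso.
      apply (avoid n a b); auto; apply greedy_prefixP; eauto.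
    + destruct (cond i) as (_ & sel & _); exact (sel n a b hi sa hj sb).
    + destruct (cond i) as (_ & _ & avoid & _); exfalso.
      apply (avoid n b a); auto; apply greedy_prefixP; eauto.
Qed.

Definition least_positive_point (x : cantor) (a : nat) : Prop :=
  x a = true /\ positive I (singleton a) /\
  forall b, b < a -> ~ (x b = true /\ positive I (singleton b)).

(* If some point of [x] is I-positive as a singleton, that singleton is already a selector;
   otherwise every finite subset of [x] is in [I], as [qplus_cond_exists] needs. *)
Definition qplus_selector (p : cantor * cantor_seq) : cantor := fun k =>
  asbool (least_positive_point (fst p) k \/
          ((forall a, fst p a = true -> I (singleton a)) /\
           greedy_union qplus_cond p k = true)).

Lemma uniformly_qplus_Fsigma : qplus I -> uniformly_qplus I.
Proof.
  intros Hq; exists qplus_selector; split.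
  - apply borel_fun_of_coords; intros k.
    assert (greedy_k : sigma_gen cantor_pair_gen (fun p => greedy_union qplus_cond p k = true)).
    { refine (borel_greedy_union qplus_cond _ _ pair_gen_nonempty _ (fun y => y k = true) _);
        [|apply sg_base; exists k; reflexivity].
      intros j u c; unfold qplus_cond, subset, selector, escapes.
      sigma_gen_closure
        ltac:(first [exact pair_gen_nonempty|apply pair_gen_fst|apply pair_gen_snd]). }
    apply (sg_ext _ _ _ (fun p => iff_sym (asboolE _))); unfold least_positive_point.
    sigma_gen_closure ltac:(first [exact pair_gen_nonempty|apply pair_gen_fst|exact greedy_k]).
  - intros x s xpos part.
    destruct (classic (exists a, x a = true /\ positive I (singleton a))) as [some|none].
    + destruct (exists_least _ some) as [a0 [[xa0 pos0] min0]].
      assert (e : forall k, qplus_selector (x, s) k = true <-> k = a0).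
      { intros k; unfold qplus_selector; rewrite asboolE; simpl; split.
        - intros [(xk & posk & mink)|[Ix _]]; [|exfalso; exact (pos0 (Ix a0 xa0))].
          destruct (lt_eq_lt_dec k a0) as [[lt|eq]|lt];
            [exfalso; exact (min0 k lt (conj xk posk))|exact eq
            |exfalso; exact (mink a0 lt (conj xa0 pos0))].
        - intros ->; left; repeat split; auto. }
      split; [|split].
      * intros k hk; apply e in hk; subst; exact xa0.
      * apply (positive_superset (singleton a0)); [exact pos0|].
        intros k hk; apply e, Nat.eqb_eq, hk.
      * intros n a b ha _ hb _; apply e in ha, hb; congruence.
    + assert (Ix : forall a, x a = true -> I (singleton a))
        by (intros a xa; apply NNPP; intros h; apply none; eauto).
      assert (e : forall k,
                 qplus_selector (x, s) k = true <-> greedy_union qplus_cond (x, s) k = true).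
      { intros k; unfold qplus_selector; rewrite asboolE; simpl; split.
        - intros [(xk & posk & _)|[_ h]]; [exfalso; apply none; eauto|exact h].
        - intros h; right; auto. }
      destruct (greedy_qplus_selector x s Hq xpos part Ix) as (sub & pos & sel).
      split; [|split].
      * intros k hk; apply sub, e, hk.
      * apply (positive_superset _ _ pos); intros k hk; apply e, hk.
      * intros n a b ha sa hb sb; apply e in ha, hb; exact (sel n a b ha sa hb sb).
Qed.

Definition selective_cond (j : nat) (X : cantor_seq) (u c : cantor) : Prop :=
  (forall a b, u a = true -> c b = true -> a < b) /\
  (forall n m, u n = true \/ c n = true -> c m = true -> n < m -> X n m = true) /\
  escapes j c.

Lemma selective_cond_exists (X : cantor_seq) :
  selective I -> (forall a, I (singleton a)) -> decreasing X -> (forall n, positive I (X n)) ->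
  forall j u, finite_set u -> exists c, selective_cond j X u (code_set c).
Proof.
  intros Hsel Isingle Xdec Xpos j u [M uM].
  assert (Ifin : forall w, finite_set w -> I w).
  { intros w; apply (finite_in_ideal (fun _ => true)); [| |intros k _; reflexivity].
    - apply (I_hereditary _ _ (Isingle 0)); intros k hk; discriminate.
    - intros a _; apply Isingle. }
  (* Points below [M] and indices below [M] are cut off, so the new piece lies above [u]
     and inside [X n] for every [n] in [u]. *)
  set (z := fun n k => (M <=? k) && X (max n M) k).
  assert (zdec : decreasing z).
  { intros n k hk; apply andb_prop in hk; destruct hk as [h1 h2].
    apply andb_true_intro; split; [exact h1|].
    apply (decreasing_le X Xdec (max n M) (max (S n) M)); [lia|exact h2]. }
  assert (zpos : forall n, positive I (z n)).
  { intros n; apply (positive_diff (X (max n M)) _ (fun k => k <? M) (Xpos _)).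
    - apply Ifin; exists M; intros k hk; apply Nat.ltb_lt, hk.
    - intros k hk; unfold z; rewrite hk, andb_true_r.
      destruct (Nat.leb_spec M k) as [le|lt]; [left; reflexivity|right; apply Nat.ltb_lt, lt]. }
  destruct (Hsel z zdec zpos) as [w [wpos wdiag]].
  destruct (classic (exists m0, w m0 = true)) as [[m0 wm0]|wempty].
  2:{ exfalso; apply wpos, Ifin; exists 0; intros k hk; exfalso; eauto. }
  set (w' := fun k => (m0 <? k) && w k).
  assert (w'pos : positive I w').
  { apply (positive_diff w _ (fun k => k <? S m0) wpos).
    - apply Ifin; exists (S m0); intros k hk; apply Nat.ltb_lt, hk.
    - intros k hk; unfold w'; rewrite hk, andb_true_r.
      destruct (Nat.ltb_spec m0 k) as [lt|le]; [left; reflexivity|right; apply Nat.ltb_lt; lia]. }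
  destruct (escaping_code w' w'pos j) as [c [esc cw']].
  assert (in_c : forall m, code_set c m = true -> M <= m /\ w m = true /\ X (max m0 M) m = true).
  { intros m cm; specialize (cw' m cm); apply andb_prop in cw'; destruct cw' as [lt wm].
    apply Nat.ltb_lt in lt; specialize (wdiag m0 wm0 m lt wm).
    apply andb_prop in wdiag; destruct wdiag as [le Xm]; apply Nat.leb_le in le; auto. }
  exists c; split; [|split; [|exact esc]].
  - intros a b ua cb; specialize (uM a ua); destruct (in_c b cb) as [le _]; lia.
  - intros n m [un|cn] cm lt.
    + destruct (in_c m cm) as (_ & _ & Xm); specialize (uM n un).
      apply (decreasing_le X Xdec n (max m0 M)); [lia|exact Xm].
    + destruct (in_c n cn) as (_ & wn & _), (in_c m cm) as (_ & wm & _).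
      specialize (wdiag n wn m lt wm); apply andb_prop in wdiag.
      apply (decreasing_le X Xdec n (max n M)); [lia|tauto].
Qed.

Lemma uniformly_selective_Fsigma : selective I -> uniformly_selective I.
Proof.
  intros Hsel; destruct (classic (exists a, positive I (singleton a))) as [[a apos]|none].
  - exists (fun _ => singleton a); split.
    + apply borel_fun_of_coords; intros k; exact (sigma_gen_const _ _ _ seq_gen_nonempty).
    + intros X _ _; split; [exact apos|]; intros n hn m lt hm.
      unfold singleton in hn, hm; apply Nat.eqb_eq in hn, hm; lia.
  - assert (Isingle : forall a, I (singleton a))
      by (intros a; apply NNPP; intros h; apply none; eauto).
    exists (greedy_union selective_cond); split.
    + apply (borel_greedy_union _ _ _ seq_gen_nonempty); intros j u c.
      unfold selective_cond, escapes.
      sigma_gen_closure ltac:(first [exact seq_gen_nonempty|apply seq_gen_atom]).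
    + intros X Xdec Xpos.
      pose proof (selective_cond_exists X Hsel Isingle Xdec Xpos) as exists_piece.
      pose proof (greedy_piece_cond _ X exists_piece) as cond.
      split;
        [apply greedy_union_positive; [intros j u c (_ & _ & esc); exact esc|exact exists_piece]|].
      intros n hn m lt hm; apply greedy_unionP in hn, hm.
      destruct hn as [i hi], hm as [j hj]; destruct (lt_eq_lt_dec i j) as [[lij|<-]|lji].
      * apply (proj1 (proj2 (cond j)) n m); auto; left; apply greedy_prefixP; eauto.
      * apply (proj1 (proj2 (cond i)) n m); auto.
      * exfalso; assert (m < n) by (apply (proj1 (cond i)); auto; apply greedy_prefixP; eauto).
        lia.
Qed.
End FsigmaIdeal.

Theorem mainTheorem9 (I : cantor -> Prop) (HI : is_ideal I) (HF : F_sigma I) :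
  uniformly_pplus I /\
  (qplus I -> uniformly_qplus I) /\
  (selective I -> uniformly_selective I).
Proof.
  destruct HI as [I_hereditary I_union], HF as [Cs [Cs_closed I_Cs]].
  split; [|split].
  - exact (uniformly_pplus_Fsigma I Cs Cs_closed I_Cs I_hereditary).
  - exact (uniformly_qplus_Fsigma I Cs Cs_closed I_Cs I_hereditary I_union).
  - exact (uniformly_selective_Fsigma I Cs Cs_closed I_Cs I_hereditary I_union).
Qed.
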